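(* A map $f:\mathbb{X}\to\mathbb{Y}$ in $p\mathsf{Ch}^*_\mathbb{Q}$ has the right lifting property with respect to every map in $\mathbb{J}_0$ if and only if, for every $0\le s\le t<\infty$, the induced map $\mathbb{X}(s)\to\mathbb{X}(t)\times_{\mathbb{Y}(t)}\mathbb{Y}(s)$ is an epimorphism (degreewise surjective).
   Context: $p\mathsf{Ch}^*_\mathbb{Q}=\mathsf{Fun}([0,\infty),\mathsf{Ch}^*_\mathbb{Q})$, non-negatively graded rational cochain complexes with differential raising degree. For $k\ge1$, $D^k$ is the complex with $\mathbb{Q}$ in degrees $k-1$ and $k$ and identity differential; $D^0=0$. $\mathbb{D}^k_s$ is the persistent complex that is $0$ at $r<s$ and $D^k$ at $r\ge s$, with identity structure maps. $\mathbb{J}_0=\{\mathbb{D}^k_t\hookrightarrow\mathbb{D}^k_s : k\in\mathbb{N},\ 0\le s<t<\infty\}$ (the evident inclusions). The map $\mathbb{X}(s)\to\mathbb{X}(t)\times_{\mathbb{Y}(t)}\mathbb{Y}(s)$ is induced by the structure map $\mathbb{X}(s\le t)$ and $f(s)$. *)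

From Stdlib Require Import Reals.
From HB Require Import structures.
From mathcomp Require Import all_boot all_order all_algebra.

Set Implicit Arguments.
Unset Strict Implicit.
Unset Printing Implicit Defensive.
Import GRing.Theory.

(* Raw data of a persistent non-negatively graded rational cochain complex:
   pobj r n = X(r)^n, pdif r n : X(r)^n -> X(r)^(n+1),
   pstr r r' n = X(r <= r') in degree n.  Only values with 0 <= r (<= r')
   matter; everything else is junk and never constrained nor used. *)
Record pch := Pch {
  pobj : R -> nat -> lmodType rat;
  pdif : forall r n, pobj r n -> pobj r n.+1;
  pstr : forall r r' n, pobj r n -> pobj r' n }.

Definition is_linear (U V : lmodType rat) (g : U -> V) : Prop :=
  forall (a : rat) (x y : U), g (a *: x + y)%R = (a *: g x + g y)%R.

Definition is_pch (X : pch) : Prop :=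
  (forall r n, (Rle R0 r) -> is_linear (@pdif X r n)) /\
  (forall r n x, (Rle R0 r) -> @pdif X r n.+1 (@pdif X r n x) = 0%R) /\
  (forall r r' n, (Rle R0 r) -> (Rle r r') -> is_linear (@pstr X r r' n)) /\
  (forall r r' n x, (Rle R0 r) -> (Rle r r') ->
      @pstr X r r' n.+1 (@pdif X r n x) = @pdif X r' n (@pstr X r r' n x)) /\
  (forall r n x, (Rle R0 r) -> @pstr X r r n x = x) /\
  (forall r r' r'' n x, (Rle R0 r) -> (Rle r r') -> (Rle r' r'') ->
      @pstr X r' r'' n (@pstr X r r' n x) = @pstr X r r'' n x).

Definition phom (X Y : pch) := forall r n, pobj X r n -> pobj Y r n.

Definition is_phom (X Y : pch) (f : phom X Y) : Prop :=
  (forall r n, (Rle R0 r) -> is_linear (f r n)) /\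
  (forall r n x, (Rle R0 r) -> f r n.+1 (@pdif X r n x) = @pdif Y r n (f r n x)) /\
  (forall r r' n x, (Rle R0 r) -> (Rle r r') ->
      f r' n (@pstr X r r' n x) = @pstr Y r r' n (f r n x)).

Definition pcomp (X Y Z : pch) (g : phom Y Z) (f : phom X Y) : phom X Z :=
  fun r n x => g r n (f r n x).

Definition pheq (X Y : pch) (f g : phom X Y) : Prop :=
  forall r n x, (Rle R0 r) -> f r n x = g r n x.

Definition dimD (k : nat) (s r : R) (n : nat) : nat :=
  if Rle_dec s r then (if (0 < k)%N && ((n == k.-1) || (n == k)) then 1 else 0)
  else 0.

(* the canonical map Q^a -> Q^b for a, b in {0,1}: identity if a = b = 1,
   zero otherwise *)
Definition pad (a b : nat) (u : 'rV[rat]_a) : 'rV[rat]_b :=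
  \row_(j < b) (if insub (val j) is Some i then u ord0 i else 0%R).

Definition diskD (k : nat) (s : R) : pch :=
  @Pch (fun r n => 'rV[rat]_(dimD k s r n))
       (fun r n => @pad (dimD k s r n) (dimD k s r n.+1))
       (fun r r' n => @pad (dimD k s r n) (dimD k s r' n)).

(* the inclusion D^k_t -> D^k_s for s < t *)
Definition diskIncl (k : nat) (t s : R) : phom (diskD k t) (diskD k s) :=
  fun r n => @pad (dimD k t r n) (dimD k s r n).

Definition RLP (A B X Y : pch) (j : phom A B) (f : phom X Y) : Prop :=
  forall (a : phom A X) (b : phom B Y),
    is_phom a -> is_phom b -> pheq (pcomp f a) (pcomp b j) ->
    exists h : phom B X, is_phom h /\ pheq (pcomp h j) a /\ pheq (pcomp f h) b.

(* A map D^(n+1)_s -> Z is the same thing as an element of Z(s)^n, namely the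
   image of the generator, and precomposing with the inclusion
   D^(n+1)_t -> D^(n+1)_s restricts that element along Z(s <= t).  A lifting
   problem of f against this inclusion is therefore a pair (x_t, y_s) with
   f(x_t) = Y(s <= t)(y_s), and a lift is an x_s restricting to x_t with
   f(x_s) = y_s.  Since D^0 = 0, the inclusions with k = 0 lift trivially. *)

From Pilot Require Import Defs.
From Stdlib Require Import Reals.
From mathcomp Require Import all_boot all_order all_algebra.
From mathcomp Require Import zify.

Set Implicit Arguments.
Unset Strict Implicit.
Unset Printing Implicit Defensive.
Import GRing.Theory.
Local Open Scope ring_scope.

Section LinearMaps.
Variables (U V : lmodType rat) (g : U -> V).
Hypothesis g_lin : is_linear g.

Lemma is_linear0 : g 0 = 0.
Proof. by have := g_lin (-1) 0 0; rewrite scaler0 addr0 scaleN1r addNr. Qed.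

Lemma is_linearZ a x : g (a *: x) = a *: g x.
Proof. by have := g_lin a x 0; rewrite !addr0 is_linear0 addr0. Qed.

Lemma is_linearD x y : g (x + y) = g x + g y.
Proof. by have := g_lin 1 x y; rewrite !scale1r. Qed.

End LinearMaps.

Definition coef d (u : 'rV[rat]_d) : rat := \sum_(j < d) u ord0 j.

Definition ones d : 'rV[rat]_d := const_mx 1.

Lemma coef_linear d a (u v : 'rV[rat]_d) : coef (a *: u + v) = a * coef u + coef v.
Proof.
by rewrite /coef mulr_sumr -big_split; apply: eq_bigr => j _; rewrite !mxE.
Qed.

Lemma rv_dim0 d (u : 'rV[rat]_d) : d = 0%N -> u = 0.
Proof. by move=> d0; subst d; apply/rowP => -[]. Qed.

Lemma coef_dim0 d (u : 'rV[rat]_d) : d = 0%N -> coef u = 0.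
Proof. by move=> d0; subst d; rewrite /coef big_ord0. Qed.

Lemma coef_ones d : d = 1%N -> coef (ones d) = 1.
Proof. by move=> d1; subst d; rewrite /coef big_ord1 mxE. Qed.

Lemma rv_le1E d (u : 'rV[rat]_d) : (d <= 1)%N -> u = coef u *: ones d.
Proof.
case: d u => [|[|//]] u _; first by apply/rowP => -[].
by apply/rowP => j; rewrite !mxE /coef big_ord1 (ord1 j) mulr1.
Qed.

Lemma pad_id a (u : 'rV[rat]_a) : @pad a a u = u.
Proof.
apply/rowP => j; rewrite mxE; case: insubP => [i _ /val_inj -> //|].
by rewrite ltn_ord.
Qed.

Lemma coef_pad a b (u : 'rV[rat]_a) : a = b -> coef (@pad a b u) = coef u.
Proof. by move=> ab; subst b; rewrite pad_id. Qed.

Lemma pad_ones a b : a = b -> @pad a b (ones a) = ones b.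
Proof. by move=> ab; subst b; rewrite pad_id. Qed.

Lemma coef_pad_dim0 a b (u : 'rV[rat]_a) : a = 0%N -> coef (@pad a b u) = 0.
Proof.
move=> a0; subst a; rewrite /coef big1 // => j _; rewrite mxE.
by case: insubP => // -[].
Qed.

Lemma dimD_le1 k s r m : (dimD k s r m <= 1)%N.
Proof. by rewrite /dimD; destruct (Rle_dec s r) => //=; case: ifP. Qed.

Lemma dimD_lt k s r m : Rlt r s -> dimD k s r m = 0%N.
Proof.
move=> rs; rewrite /dimD; destruct (Rle_dec s r) as [sr|] => //.
by case: (Rlt_not_le _ _ rs).
Qed.

Lemma dimD_eq k s t r r' m : Rle s r -> Rle t r' -> dimD k s r m = dimD k t r' m.
Proof. by move=> sr tr'; rewrite /dimD; destruct (Rle_dec s r); destruct (Rle_dec t r'). Qed.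

Lemma dimD0 s r m : dimD 0 s r m = 0%N.
Proof. by rewrite /dimD; destruct (Rle_dec s r). Qed.

Lemma dimD_n n s r : Rle s r -> dimD n.+1 s r n = 1%N.
Proof. by move=> sr; rewrite /dimD; destruct (Rle_dec s r) => //=; rewrite eqxx. Qed.

Lemma dimD_Sn n s r : Rle s r -> dimD n.+1 s r n.+1 = 1%N.
Proof. by move=> sr; rewrite /dimD; destruct (Rle_dec s r) => //=; rewrite eqxx orbT. Qed.

Lemma dimD_SSn n s r : dimD n.+1 s r n.+2 = 0%N.
Proof. by rewrite /dimD; destruct (Rle_dec s r) => //=; rewrite !gtn_eqF. Qed.

Lemma dimD_neq0 n s r m : dimD n.+1 s r m <> 0%N -> m = n \/ m = n.+1.
Proof.
rewrite /dimD; destruct (Rle_dec s r) => //=.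
by case: eqP => [->|_]; [left|case: eqP => [->|_]; [right|]].
Qed.

Section PersistentComplexes.
Variable Z : pch.
Hypothesis HZ : is_pch Z.

Lemma pdif_linear r n : Rle R0 r -> is_linear (@pdif Z r n).
Proof. by case: HZ => H _; apply: H. Qed.

Lemma pdifK r n x : Rle R0 r -> @pdif Z r n.+1 (@pdif Z r n x) = 0.
Proof. by case: HZ => _ [H _]; apply: H. Qed.

Lemma pstr_linear r r' n : Rle R0 r -> Rle r r' -> is_linear (@pstr Z r r' n).
Proof. by case: HZ => _ [_ [H _]]; apply: H. Qed.

Lemma pstr_pdif r r' n x : Rle R0 r -> Rle r r' ->
  @pstr Z r r' n.+1 (@pdif Z r n x) = @pdif Z r' n (@pstr Z r r' n x).
Proof. by case: HZ => _ [_ [_ [H _]]]; apply: H. Qed.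

Lemma pstr_id r n x : Rle R0 r -> @pstr Z r r n x = x.
Proof. by case: HZ => _ [_ [_ [_ [H _]]]]; apply: H. Qed.

Lemma pstr_comp r r' r'' n x : Rle R0 r -> Rle r r' -> Rle r' r'' ->
  @pstr Z r' r'' n (@pstr Z r r' n x) = @pstr Z r r'' n x.
Proof. by case: HZ => _ [_ [_ [_ [_ H]]]]; apply: H. Qed.

End PersistentComplexes.

Section PersistentMaps.
Variables (X Y : pch) (f : phom X Y).
Arguments f : clear implicits.
Hypothesis Hf : is_phom f.

Lemma phom_linear r n : Rle R0 r -> is_linear (f r n).
Proof. by case: Hf => H _; apply: H. Qed.

Lemma phom_pdif r n x : Rle R0 r -> f r n.+1 (@pdif X r n x) = @pdif Y r n (f r n x).
Proof. by case: Hf => _ [H _]; apply: H. Qed.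

Lemma phom_pstr r r' n x : Rle R0 r -> Rle r r' ->
  f r' n (@pstr X r r' n x) = @pstr Y r r' n (f r n x).
Proof. by case: Hf => _ [_ H]; apply: H. Qed.

End PersistentMaps.

Section DegreeCast.
Variable P : nat -> lmodType rat.

Definition cast_deg n (z : P n) m : P m :=
  match Nat.eq_dec n m with left e => eq_rect n P z m e | right _ => 0 end.

Lemma cast_deg_id n (z : P n) : cast_deg z n = z.
Proof. by rewrite /cast_deg; case: (Nat.eq_dec n n) => [e|//]; rewrite (eq_axiomK e). Qed.

Lemma cast_deg_neq n (z : P n) m : n <> m -> cast_deg z m = 0.
Proof. by rewrite /cast_deg; case: (Nat.eq_dec n m). Qed.

End DegreeCast.

Lemma cast_deg_map (P Q : nat -> lmodType rat) (phi : forall m, P m -> Q m) n (z : P n) m :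
  (forall m, phi m 0 = 0) -> phi m (cast_deg z m) = cast_deg (phi n z) m.
Proof.
move=> phi0; rewrite /cast_deg; case: (Nat.eq_dec n m) => [e|_]; last exact: phi0.
by case: m / e.
Qed.

(* [z] in degree [n], [dz] in degree [n.+1] and [0] elsewhere: the image of
   the generators of D^(n+1) under the map D^(n+1)_s -> Z classified by [z]. *)
Definition span_cochain (Z : pch) s n (z : pobj Z s n) m : pobj Z s m :=
  match m with
  | 0 => cast_deg z 0
  | m'.+1 => @pdif Z s m' (cast_deg z m') + cast_deg z m'.+1
  end.

Lemma span_cochain_n (Z : pch) s n (z : pobj Z s n) :
  is_pch Z -> Rle R0 s -> span_cochain z n = z.
Proof.
move=> HZ s0; case: n z => [|n] z /=; first exact: cast_deg_id.
rewrite cast_deg_id cast_deg_neq; last by lia.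
by rewrite (is_linear0 (pdif_linear HZ s0)) add0r.
Qed.

Lemma span_cochain_Sn (Z : pch) s n (z : pobj Z s n) :
  span_cochain z n.+1 = @pdif Z s n z.
Proof. by rewrite /= cast_deg_id cast_deg_neq ?addr0 //; lia. Qed.

Lemma span_cochain_map (Z W : pch) s s' (phi : forall m, pobj Z s m -> pobj W s' m)
    n (z : pobj Z s n) m :
  (forall m x y, phi m (x + y) = phi m x + phi m y) -> (forall m, phi m 0 = 0) ->
  (forall m x, phi m.+1 (@pdif Z s m x) = @pdif W s' m (phi m x)) ->
  phi m (span_cochain z m) = span_cochain (phi n z) m.
Proof.
move=> phiD phi0 phi_dif; case: m => [|m] /=; first exact: cast_deg_map.
by rewrite phiD phi_dif !(cast_deg_map _ _ phi0).
Qed.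

Definition disk_map (Z : pch) k s n (z : pobj Z s n) : phom (diskD k s) Z :=
  fun r m u => if Rle_dec s r then coef u *: @pstr Z s r m (span_cochain z m) else 0.
Arguments disk_map {Z} k {s n} z.

Lemma disk_mapE (Z : pch) k s n (z : pobj Z s n) r m u : Rle s r ->
  disk_map k z r m u = coef u *: @pstr Z s r m (span_cochain z m).
Proof. by move=> sr; rewrite /disk_map; destruct (Rle_dec s r). Qed.

Lemma disk_map_lt (Z : pch) k s n (z : pobj Z s n) r m u : Rlt r s ->
  disk_map k z r m u = 0.
Proof.
move=> rs; rewrite /disk_map; destruct (Rle_dec s r) as [sr|] => //.
by case: (Rlt_not_le _ _ rs).
Qed.

Section DiskMaps.
Variable Z : pch.
Hypothesis HZ : is_pch Z.

Lemma disk_map_phom s n (z : pobj Z s n) : Rle R0 s -> is_phom (disk_map n.+1 z).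
Proof.
move=> s0; split; [|split].
- move=> r m r0 a u v; have [sr|rs] := Rle_lt_dec s r.
    by rewrite !disk_mapE // coef_linear scalerDl scalerA.
  by rewrite !disk_map_lt // scaler0 addr0.
- move=> r m u r0; have [sr|rs] := Rle_lt_dec s r; last first.
    by rewrite !disk_map_lt // (is_linear0 (pdif_linear HZ r0)).
  rewrite !disk_mapE // (is_linearZ (pdif_linear HZ r0)) -(pstr_pdif HZ _ s0 sr).
  have [dim0|/dimD_neq0 dim_neq0] := dimD n.+1 s r m =P 0%N.
    by rewrite (coef_dim0 u dim0) (coef_pad_dim0 _ _ dim0) !scale0r.
  case: dim_neq0 => Em; subst m.
  + rewrite (coef_pad _ (etrans (dimD_n _ sr) (esym (dimD_Sn _ sr)))).
    by rewrite span_cochain_Sn (span_cochain_n _ HZ).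
  + rewrite (coef_dim0 _ (dimD_SSn _ _ _)) scale0r span_cochain_Sn pdifK //.
    by rewrite (is_linear0 (pstr_linear HZ s0 sr)) scaler0.
- move=> r r' m u r0 rr'; have [sr|rs] := Rle_lt_dec s r.
    have sr' := Rle_trans _ _ _ sr rr'.
    rewrite !disk_mapE // (coef_pad _ (dimD_eq _ _ sr sr')).
    by rewrite (is_linearZ (pstr_linear HZ r0 rr')) (pstr_comp HZ _ s0 sr rr').
  have [sr'|r's] := Rle_lt_dec s r'; first rewrite disk_mapE // disk_map_lt //.
    by rewrite (is_linear0 (pstr_linear HZ r0 rr')) (coef_pad_dim0 _ _ (dimD_lt _ _ rs)) scale0r.
  by rewrite !disk_map_lt // (is_linear0 (pstr_linear HZ r0 rr')).
Qed.

Lemma disk_map_ones s n (z : pobj Z s n) : Rle R0 s -> disk_map n.+1 z s n (ones _) = z.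
Proof.
move=> s0; have ss := Rle_refl s.
by rewrite disk_mapE // (coef_ones (dimD_n n ss)) scale1r (pstr_id HZ _ s0) (span_cochain_n _ HZ).
Qed.

Lemma phom_diskE s n (p : phom (diskD n.+1 s) Z) :
  Rle R0 s -> is_phom p -> pheq p (disk_map n.+1 (p s n (ones _))).
Proof.
move=> s0 Hp r m u r0; have [sr|rs] := Rle_lt_dec s r; last first.
  by rewrite disk_map_lt // (rv_dim0 u (dimD_lt _ _ rs)) (is_linear0 (phom_linear Hp r0)).
rewrite disk_mapE // {1}(rv_le1E u (dimD_le1 _ _ _ _)) (is_linearZ (phom_linear Hp r0)).
have [dim0|dim_neq0] := dimD n.+1 s r m =P 0%N; first by rewrite (coef_dim0 u dim0) !scale0r.
congr (_ *: _); rewrite -(pad_ones (dimD_eq n.+1 m (Rle_refl s) sr)).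
rewrite (phom_pstr Hp _ s0 sr); congr (@pstr Z s r m _).
case/dimD_neq0: dim_neq0 => ->; first by rewrite (span_cochain_n _ HZ).
rewrite span_cochain_Sn -(phom_pdif Hp _ s0); congr (p s n.+1 _).
by symmetry; apply: pad_ones; rewrite (dimD_n _ (Rle_refl s)) (dimD_Sn _ (Rle_refl s)).
Qed.

Lemma disk_map_incl k s t n (z : pobj Z s n) : Rle R0 s -> Rle s t ->
  pheq (Defs.pcomp (disk_map k z) (@diskIncl k t s)) (disk_map k (@pstr Z s t n z)).
Proof.
move=> s0 st r m u r0; rewrite /Defs.pcomp /diskIncl.
have [tr|rt] := Rle_lt_dec t r; last first.
  have [sr|rs] := Rle_lt_dec s r; last by rewrite !disk_map_lt.
  by rewrite disk_mapE // disk_map_lt // (coef_pad_dim0 _ _ (dimD_lt _ _ rt)) scale0r.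
have sr := Rle_trans _ _ _ st tr.
rewrite !disk_mapE // (coef_pad _ (dimD_eq _ _ tr sr)) -(pstr_comp HZ _ s0 st tr).
congr (_ *: @pstr Z t r m _).
apply: (span_cochain_map (phi := fun m => @pstr Z s t m)) => [m' x y|m'|m' x].
- exact: (is_linearD (pstr_linear HZ s0 st)).
- exact: (is_linear0 (pstr_linear HZ s0 st)).
- exact: (pstr_pdif HZ _ s0 st).
Qed.

Lemma diskIncl_ones n s t : Rle s t ->
  @diskIncl n.+1 t s t n (ones _) = @pstr (diskD n.+1 s) s t n (ones _).
Proof.
move=> st; rewrite /diskIncl /= (pad_ones (dimD_eq _ _ (Rle_refl t) st)).
by rewrite (pad_ones (dimD_eq _ _ (Rle_refl s) st)).
Qed.

End DiskMaps.

Lemma phom_disk_map (X Y : pch) (f : phom X Y) k s n (z : pobj X s n) :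
  is_phom f -> Rle R0 s ->
  pheq (Defs.pcomp f (disk_map k z)) (disk_map k (f s n z)).
Proof.
move=> Hf s0 r m u r0; rewrite /Defs.pcomp.
have [sr|rs] := Rle_lt_dec s r; last first.
  by rewrite !disk_map_lt // (is_linear0 (phom_linear Hf r0)).
rewrite !disk_mapE // (is_linearZ (phom_linear Hf r0)) (phom_pstr Hf _ s0 sr).
congr (_ *: @pstr Y s r m _).
apply: (span_cochain_map (phi := f s)) => [m' x y|m'|m' x].
- exact: (is_linearD (phom_linear Hf s0)).
- exact: (is_linear0 (phom_linear Hf s0)).
- exact: (phom_pdif Hf _ s0).
Qed.

Section Lifting.
Variables (X Y : pch) (f : phom X Y).
Arguments f : clear implicits.
Hypotheses (HX : is_pch X) (HY : is_pch Y) (Hf : is_phom f).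

Definition pullback_map_surj s t n : Prop :=
  forall (xt : pobj X t n) (ys : pobj Y s n), f t n xt = @pstr Y s t n ys ->
  exists xs : pobj X s n, @pstr X s t n xs = xt /\ f s n xs = ys.

Lemma RLP_disk0 s t : RLP (@diskIncl 0 t s) f.
Proof.
move=> a b Ha Hb _; exists (fun r m _ => 0); split; [split; [|split]|split].
- by move=> r m r0 c u v; rewrite scaler0 addr0.
- by move=> r m u r0; rewrite (is_linear0 (pdif_linear HX r0)).
- by move=> r r' m u r0 rr'; rewrite (is_linear0 (pstr_linear HX r0 rr')).
- by move=> r m u r0; rewrite (rv_dim0 u (dimD0 _ _ _)) (is_linear0 (phom_linear Ha r0)).
- move=> r m u r0; rewrite /Defs.pcomp (is_linear0 (phom_linear Hf r0)).
  by rewrite (rv_dim0 u (dimD0 _ _ _)) (is_linear0 (phom_linear Hb r0)).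
Qed.

Lemma RLP_disk_pullback_map_surj s t n : Rle R0 s -> Rle s t ->
  RLP (@diskIncl n.+1 t s) f -> pullback_map_surj s t n.
Proof.
move=> s0 st lift xt ys fxt; have t0 := Rle_trans _ _ _ s0 st.
have square : pheq (Defs.pcomp f (disk_map n.+1 xt))
                   (Defs.pcomp (disk_map n.+1 ys) (@diskIncl n.+1 t s)).
  by move=> r m u r0; rewrite (phom_disk_map _ Hf) // fxt (disk_map_incl HY).
have [h [Hh [h_incl f_h]]] := lift _ _ (disk_map_phom HX _ t0) (disk_map_phom HY _ s0) square.
exists (h s n (ones _)); split.
- rewrite -(phom_pstr Hh _ s0 st) -diskIncl_ones //.
  by rewrite [LHS]h_incl // disk_map_ones.
- by rewrite [LHS]f_h // disk_map_ones.
Qed.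

Lemma pullback_map_surj_RLP_disk s t n : Rle R0 s -> Rle s t ->
  pullback_map_surj s t n -> RLP (@diskIncl n.+1 t s) f.
Proof.
move=> s0 st lift a b Ha Hb square; have t0 := Rle_trans _ _ _ s0 st.
have fxt : f t n (a t n (ones _)) = @pstr Y s t n (b s n (ones _)).
  rewrite -(phom_pstr Hb _ s0 st) -diskIncl_ones //.
  exact: square.
have [xs [xs_t f_xs]] := lift _ _ fxt.
exists (disk_map n.+1 xs); split; first exact: disk_map_phom.
split=> r m u r0.
- by rewrite (disk_map_incl HX) // xs_t -(phom_diskE HX).
- by rewrite (phom_disk_map _ Hf) // f_xs -(phom_diskE HY).
Qed.

End Lifting.

Theorem mainTheorem5 (X Y : pch) (f : phom X Y) :
  is_pch X -> is_pch Y -> is_phom f ->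
  ((forall (k : nat) (s t : R), (Rle R0 s) -> (Rlt s t) ->
       @RLP _ _ X Y (@diskIncl k t s) f)
   <->
   (forall (s t : R) (n : nat), (Rle R0 s) -> (Rle s t) ->
      forall (xt : pobj X t n) (ys : pobj Y s n),
        f t n xt = @pstr Y s t n ys ->
        exists xs : pobj X s n, @pstr X s t n xs = xt /\ f s n xs = ys)).
Proof.
move=> HX HY Hf; split.
- move=> lift s t n s0 st xt ys fxt.
  have [lt|eq_st] := Rle_lt_or_eq_dec s t st.
    exact: (RLP_disk_pullback_map_surj HX HY Hf s0 st (lift _ _ _ s0 lt) fxt).
  subst t; exists xt.
  by rewrite (pstr_id HX _ s0) fxt (pstr_id HY _ s0).
- move=> lift [|n] s t s0 st; first exact: RLP_disk0.
  have st' := Rlt_le _ _ st.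
  by apply: (pullback_map_surj_RLP_disk HX HY Hf s0 st'); apply: lift.
Qed.
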